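(* For every $c>1$ there exist $k\in\mathbb{N}$, real numbers $1\le t_1<t_2<\dots<t_k<c$, and $k$ power functions $f_1,\dots,f_k$ (i.e. $f_i(b)=a_ib^{s_i}$ with constants $a_i\in\mathbb{R}$) whose orders $s_i$ satisfy $0\le s_i<c$, such that $$(b+w)^c-b^c-w^c\le\sum_{i=1}^k f_i(b)\,w^{t_i}\qquad\text{for all } b,w\ge0.$$ *)

From HB Require Import structures.
From mathcomp Require Import all_boot all_order all_algebra.
From mathcomp Require Import all_classical all_reals all_analysis.
Set Implicit Arguments. Unset Strict Implicit. Unset Printing Implicit Defensive.
Import Order.TTheory GRing.Theory Num.Theory.
Local Open Scope ring_scope.

Definition power_fun {R : realType} (a s : R) (b : R) : R := a * b `^ s.

(* Convexity of x |-> x^c on [1, 2] gives (1 + x)^c <= 1 + (2^c - 1) x for x in [0, 1], hence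
   (u + v)^c - u^c <= 2^c u^(c-1) v whenever 0 <= v <= u.  Applied with u = max(b, w) and
   v = min(b, w), this bounds (b + w)^c - b^c - w^c by 2^c b^(c-1) w when w <= b, and by
   2^c w^(c-1) b <= 2^c b^d w^(c-d) when b <= w, for any 0 < d <= 1.  Taking d < c - 1 makes
   both exponents of w, namely 1 and c - d, lie in [1, c). *)
From HB Require Import structures.
From mathcomp Require Import all_boot all_order all_algebra.
From mathcomp Require Import all_classical all_reals all_analysis.
From mathcomp Require Import ring lra.
Set Implicit Arguments. Unset Strict Implicit.
Import Order.TTheory GRing.Theory Num.Theory.
Local Open Scope ring_scope.

Section PowerEstimates.

Variables (R : realType) (c : R).
Hypothesis c_ge1 : 1 <= c.

Lemma powR_1Dx_chord (x : R) : 0 <= x -> x <= 1 ->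
  (1 + x) `^ c <= 1 + (2 `^ c - 1) * x.
Proof.
move=> x_ge0 x_le1.
have := convex_powR c_ge1 (Itv01 x_ge0 x_le1) (x := 2) (y := 1).
rewrite !inE /= !in_itv /= !andbT => /(_ ltac:(lra) ltac:(lra)).
rewrite convRE /= powR1 mulr1 /unstable.onem.
set y := conv _ _ _ => y_le.
have y_eq : y = 1 + x by transitivity (x * 2 + (1 - x) * 1); [by [] | ring].
by rewrite y_eq in y_le; apply: (le_trans y_le); lra.
Qed.

Lemma powRD_sub_le (u v : R) : 0 <= v -> v <= u ->
  (u + v) `^ c - u `^ c <= 2 `^ c * (u `^ (c - 1) * v).
Proof.
move=> v_ge0 v_le_u.
have [u0|u_neq0] := eqVneq u 0.
  have v0 : v = 0 by apply: le_anti; rewrite v_ge0 -u0 v_le_u.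
  by rewrite u0 v0 addr0 subrr mulr0 mulr0.
have u_pos : 0 < u by rewrite lt_neqAle eq_sym u_neq0 (le_trans v_ge0).
have x_ge0 : 0 <= v / u by rewrite divr_ge0 // ltW.
have x_le1 : v / u <= 1 by rewrite ler_pdivrMr // mul1r.
have -> : u + v = u * (1 + v / u) by field; rewrite gt_eqF.
rewrite powRM ?(ltW u_pos) //; last lra.
have u_c : u `^ c = u * u `^ (c - 1).
  by rewrite mulr_powRB1 ?(ltW u_pos) ?(lt_le_trans ltr01 c_ge1).
have := ler_wpM2l (powR_ge0 u c) (powR_1Dx_chord x_ge0 x_le1).
have -> : u `^ c * (1 + (2 `^ c - 1) * (v / u))
          = u `^ c + (2 `^ c - 1) * (u `^ (c - 1) * v).
  by rewrite u_c; field; rewrite gt_eqF.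
have : 0 <= u `^ (c - 1) * v by rewrite mulr_ge0 // powR_ge0.
lra.
Qed.

End PowerEstimates.

Lemma powR_trade_exponent (R : realType) (c d b w : R) :
  0 < d -> d <= 1 -> 0 <= b -> b <= w ->
  w `^ (c - 1) * b <= b `^ d * w `^ (c - d).
Proof.
move=> d_gt0 d_le1 b_ge0 b_le_w.
have [->|b_neq0] := eqVneq b 0.
  by rewrite mulr0 mulr_ge0 // powR_ge0.
have w_neq0 : w != 0 by rewrite gt_eqF // (lt_le_trans _ b_le_w) // lt_neqAle eq_sym b_neq0.
have b_split : b = b `^ d * b `^ (1 - d).
  by rewrite -powRD; [rewrite addrC subrK powRr1 | apply/implyP].
have w_split : w `^ (c - d) = w `^ (c - 1) * w `^ (1 - d).
  by rewrite -powRD; [congr (_ `^ _); ring | apply/implyP].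
have b_le_w_pow : b `^ (1 - d) <= w `^ (1 - d).
  by apply: ge0_ler_powR => //; rewrite ?nnegrE; lra.
rewrite w_split {1}b_split mulrCA.
by rewrite ler_wpM2l ?powR_ge0 // ler_wpM2l ?powR_ge0.
Qed.

Lemma powRD_superadditivity_defect_le (R : realType) (c d b w : R) :
  1 <= c -> 0 < d -> d <= 1 -> 0 <= b -> 0 <= w ->
  (b + w) `^ c - b `^ c - w `^ c
    <= 2 `^ c * b `^ (c - 1) * w + 2 `^ c * b `^ d * w `^ (c - d).
Proof.
move=> c_ge1 d_gt0 d_le1 b_ge0 w_ge0.
have first_ge0 : 0 <= 2 `^ c * b `^ (c - 1) * w by rewrite !mulr_ge0 ?powR_ge0.
have second_ge0 : 0 <= 2 `^ c * b `^ d * w `^ (c - d) by rewrite !mulr_ge0 ?powR_ge0.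
have bc_ge0 := powR_ge0 b c; have wc_ge0 := powR_ge0 w c.
case: (leP w b) => [w_le_b|/ltW b_le_w].
  have := powRD_sub_le c_ge1 w_ge0 w_le_b.
  rewrite -mulrA; lra.
have := powRD_sub_le c_ge1 b_ge0 b_le_w.
have := ler_wpM2l (powR_ge0 2 c) (powR_trade_exponent c d_gt0 d_le1 b_ge0 b_le_w).
rewrite (addrC w b) !mulrA; lra.
Qed.

Theorem lemmaC1 (R : realType) (c : R) (hc : 1 < c) :
  exists (k : nat) (t a s : 'I_k -> R),
    (forall i, 1 <= t i /\ t i < c) /\
    (forall i j : 'I_k, (i < j)%N -> t i < t j) /\
    (forall i, 0 <= s i /\ s i < c) /\
    (forall b w : R, 0 <= b -> 0 <= w ->
       (b + w) `^ c - b `^ c - w `^ c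
         <= \sum_(i < k) power_fun (a i) (s i) b * w `^ (t i)).
Proof.
pose d := (c - 1) / (c + 1).
have d_gt0 : 0 < d by rewrite divr_gt0 //; lra.
have d_le1 : d <= 1 by rewrite ler_pdivrMr; lra.
have d_lt : d < c - 1 by rewrite ltr_pdivrMr; nra.
exists 2%N, (fun i : 'I_2 => if val i == 0%N then 1 else c - d), (fun _ => 2 `^ c),
  (fun i : 'I_2 => if val i == 0%N then c - 1 else d).
split; first by case=> [[|[|]]] //= _; lra.
split; first by case=> [[|[|]]] //= _ [[|[|]]] //= _ _; lra.
split; first by case=> [[|[|]]] //= _; lra.
move=> b w b_ge0 w_ge0.
rewrite !big_ord_recr big_ord0 /= add0r /power_fun powRr1 //.
exact: powRD_superadditivity_defect_le (ltW hc) d_gt0 d_le1 b_ge0 w_ge0.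
Qed.
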